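(* Let $L_w=BWB^\top\in\mathbb{R}^{n\times n}$ be the weighted Laplacian of a connected undirected graph with strictly positive edge weights. Let $i\neq j$ be two nodes and $E=e_i-e_j\in\mathbb{R}^n$ (a single port). Consider the single-input single-output system $\dot x=-L_w x + E d$, $y=E^\top x$, with $d\in\mathbb{R}$. Then the induced $\mathcal{L}_2$-gain ($\mathcal{H}_\infty$-norm) from $d$ to $y$ equals $$\gamma = R_{ij}(L_w) := (e_i-e_j)^\top L_w^{\dagger}(e_i-e_j),$$ the effective resistance between nodes $i$ and $j$.
   Context: A weighted undirected graph has nodes $v_1,\dots,v_n$, edges $\mathcal{E}_1,\dots,\mathcal{E}_m$ and weights $w_1,\dots,w_m$. With an arbitrary orientation of each edge, the incidence matrix $B\in\mathbb{R}^{n\times m}$ has $B_{ij}=1$ if edge $\mathcal{E}_j$ starts at $v_i$, $-1$ if it ends at $v_i$, $0$ otherwise; $W=\mathrm{diag}(w_1,\dots,w_m)$ and $L_w=BWB^\top$. $e_1,\dots,e_n$ is the canonical basis of $\mathbb{R}^n$ and $L_w^\dagger$ is the Moore–Penrose pseudoinverse. The induced $\mathcal{L}_2$-gain from $d$ to $y$ (with $x(0)=0$) is $\sup_{d\in L_2[0,\infty),d\ne0}\|y\|_2/\|d\|_2$, equivalently $\sup_{\omega\in\mathbb{R}}|\mathbb{G}(j\omega)|$ with $\mathbb{G}(s)=E^\top(sI+L_w)^{-1}E$. *)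

From HB Require Import structures.
From mathcomp Require Import all_boot all_order all_algebra.
From Stdlib Require Import ClassicalEpsilon.
Set Implicit Arguments. Unset Strict Implicit. Unset Printing Implicit Defensive.
Import Order.TTheory GRing.Theory Num.Theory.
Local Open Scope ring_scope.

(* Graph on nodes 'I_n with m edges; edge k goes from src k to dst k
   (arbitrary orientation). *)

Definition incidence (C : numClosedFieldType) (n m : nat)
  (src dst : 'I_m -> 'I_n) : 'M[C]_(n, m) :=
  \matrix_(i < n, k < m) ((i == src k)%:R - (i == dst k)%:R).

Definition laplacian (C : numClosedFieldType) (n m : nat)
  (src dst : 'I_m -> 'I_n) (w : 'I_m -> C) : 'M[C]_n :=
  incidence C src dst *m diag_mx (\row_k w k) *m (incidence C src dst)^T.

Definition simple_edges (n m : nat) (src dst : 'I_m -> 'I_n) : Prop :=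
  (forall k, src k != dst k) /\
  (forall k l, k != l ->
     ~ ((src k == src l) && (dst k == dst l) || (src k == dst l) && (dst k == src l))).

Definition adj (n m : nat) (src dst : 'I_m -> 'I_n) : rel 'I_n :=
  fun x y => [exists k, ((src k == x) && (dst k == y)) || ((src k == y) && (dst k == x))].

Definition connected_graph (n m : nat) (src dst : 'I_m -> 'I_n) : Prop :=
  forall x y : 'I_n, connect (adj src dst) x y.

Definition ctr (C : numClosedFieldType) (p q : nat) (A : 'M[C]_(p, q)) : 'M[C]_(q, p) :=
  (map_mx Num.conj A)^T.

Definition is_MP_pinv (C : numClosedFieldType) (n : nat) (A X : 'M[C]_n) : Prop :=
  [/\ A *m X *m A = A, X *m A *m X = X,
      ctr (A *m X) = A *m X & ctr (X *m A) = X *m A].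

Definition pinv (C : numClosedFieldType) (n : nat) (A : 'M[C]_n) : 'M[C]_n :=
  epsilon (inhabits 0) (is_MP_pinv A).

Definition port (C : numClosedFieldType) (n : nat) (i j : 'I_n) : 'cV[C]_n :=
  \col_k ((k == i)%:R - (k == j)%:R).

Definition transfer (C : numClosedFieldType) (n : nat) (L : 'M[C]_n)
  (E : 'cV[C]_n) (s : C) : C :=
  (E^T *m invmx (s%:M + L) *m E) ord0 ord0.

Definition is_lub (C : numClosedFieldType) (P : C -> Prop) (g : C) : Prop :=
  (forall x, P x -> x <= g) /\ (forall b, (forall x, P x -> x <= b) -> g <= b).

(* Set { |G(j w)| : w real, w <> 0 }  (at w = 0 the expression sI+L is singular;
   G extends continuously there, so the sup over w <> 0 equals the sup over all w). *)
Definition freq_gains (C : numClosedFieldType) (n : nat) (L : 'M[C]_n)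
  (E : 'cV[C]_n) : C -> Prop :=
  fun x => exists om : C, [/\ om \is Num.real, om != 0 & x = `|transfer L E ('i * om)|].

Definition is_hinf_norm (C : numClosedFieldType) (n : nat) (L : 'M[C]_n)
  (E : 'cV[C]_n) (g : C) : Prop := is_lub (freq_gains L E) g.

Definition eff_resistance (C : numClosedFieldType) (n : nat) (L : 'M[C]_n)
  (i j : 'I_n) : C :=
  ((port C i j)^T *m pinv L *m port C i j) ord0 ord0.

(* The Laplacian L = B W B^* is Hermitian positive semidefinite and its kernel
   consists of the constant vectors, to which e = E^T is orthogonal; hence
   y := e L^+ satisfies y L = e and the effective resistance is R = <y L, y>.
   At s = i om put z := e (s + L)^-1, a := <z L, z> >= 0 and b := <z, z> >= 0.
   Then G(s) = a - i om b = <z L, y>, so Cauchy-Schwarz for the form of L gives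
   |G|^2 <= a R and therefore |G| <= R.  Moreover R - a + i om b = s <z, y>, and
   Cauchy-Schwarz for the standard form yields (R - |G|)^2 <= |om| <y, y> R:
   |G(i om)| tends to R as om -> 0, so R is the supremum. *)

From HB Require Import structures.
From mathcomp Require Import all_boot all_order all_algebra.
From Stdlib Require Import ClassicalEpsilon.
From mathcomp Require Import ring.
Import Order.TTheory GRing.Theory Num.Theory.
Set Implicit Arguments. Unset Strict Implicit.
Local Open Scope ring_scope.

Section HermitianForms.
Variable C : numClosedFieldType.

Lemma ctrE p q (A : 'M[C]_(p, q)) i j : ctr A i j = (A j i)^*.
Proof. by rewrite /ctr !mxE. Qed.

Lemma ctrK p q (A : 'M[C]_(p, q)) : ctr (ctr A) = A.
Proof. by apply/matrixP => i k; rewrite !ctrE conjCK. Qed.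

Lemma ctrM p q r (A : 'M[C]_(p, q)) (B : 'M[C]_(q, r)) : ctr (A *m B) = ctr B *m ctr A.
Proof. by rewrite /ctr (map_mxM Num.conj_op) trmx_mul. Qed.

Lemma ctr_inv p (A : 'M[C]_p) : ctr (invmx A) = invmx (ctr A).
Proof. by rewrite /ctr (map_invmx Num.conj_op) trmx_inv. Qed.

Lemma row_free_ctr p q (A : 'M[C]_(p, q)) : row_free (ctr A) = row_full A.
Proof. by rewrite /row_free /row_full /ctr mxrank_tr (mxrank_map Num.conj_op). Qed.

Definition dotmx p (u v : 'rV[C]_p) : C := (u *m ctr v) 0 0.

Lemma dotmxE p (u v : 'rV[C]_p) : dotmx u v = \sum_k u 0 k * (v 0 k)^*.
Proof. by rewrite /dotmx mxE; apply: eq_bigr => k _; rewrite ctrE. Qed.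

Lemma dotmxC p (u v : 'rV[C]_p) : dotmx v u = (dotmx u v)^*.
Proof.
by rewrite !dotmxE rmorph_sum; apply: eq_bigr => k _; rewrite rmorphM /= conjCK mulrC.
Qed.

Lemma dotmxDl p (u1 u2 v : 'rV[C]_p) : dotmx (u1 + u2) v = dotmx u1 v + dotmx u2 v.
Proof. by rewrite /dotmx mulmxDl mxE. Qed.

Lemma dotmxBl p (u1 u2 v : 'rV[C]_p) : dotmx (u1 - u2) v = dotmx u1 v - dotmx u2 v.
Proof. by rewrite /dotmx mulmxBl !mxE. Qed.

Lemma dotmxZl p a (u v : 'rV[C]_p) : dotmx (a *: u) v = a * dotmx u v.
Proof. by rewrite /dotmx -scalemxAl mxE. Qed.

Lemma dotmxDr p (u v1 v2 : 'rV[C]_p) : dotmx u (v1 + v2) = dotmx u v1 + dotmx u v2.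
Proof. by rewrite dotmxC dotmxDl rmorphD /= -!dotmxC. Qed.

Lemma dotmxBr p (u v1 v2 : 'rV[C]_p) : dotmx u (v1 - v2) = dotmx u v1 - dotmx u v2.
Proof. by rewrite dotmxC dotmxBl rmorphB /= -!dotmxC. Qed.

Lemma dotmxZr p a (u v : 'rV[C]_p) : dotmx u (a *: v) = a^* * dotmx u v.
Proof. by rewrite dotmxC dotmxZl rmorphM /= -dotmxC. Qed.

Lemma dotmx_mulmxl p q (u : 'rV[C]_p) (v : 'rV[C]_q) (A : 'M[C]_(p, q)) :
  dotmx (u *m A) v = dotmx u (v *m ctr A).
Proof. by rewrite /dotmx ctrM ctrK mulmxA. Qed.

Lemma dotmx0l p (v : 'rV[C]_p) : dotmx 0 v = 0.
Proof. by rewrite /dotmx mul0mx mxE. Qed.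

Lemma dotmx0r p (u : 'rV[C]_p) : dotmx u 0 = 0.
Proof. by rewrite dotmxE big1 // => k _; rewrite mxE rmorph0 mulr0. Qed.

Lemma dotmx_ge0 p (u : 'rV[C]_p) : 0 <= dotmx u u.
Proof. by rewrite dotmxE; apply: sumr_ge0 => k _; apply: mul_conjC_ge0. Qed.

Lemma dotmx_eq0 p (u : 'rV[C]_p) : (dotmx u u == 0) = (u == 0).
Proof.
apply/eqP/eqP => [|->]; last exact: dotmx0l.
rewrite dotmxE => /psumr_eq0P u0; apply/rowP => k; apply/eqP.
by rewrite mxE -mul_conjC_eq0 u0 // => l _; apply: mul_conjC_ge0.
Qed.

Lemma unitmx_row_inj p (A : 'M[C]_p) :
  (forall u : 'rV_p, u *m A = 0 -> u = 0) -> A \in unitmx.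
Proof.
move=> Ainj; rewrite -row_free_unit -kermx_eq0; apply/eqP/row_matrixP => k.
by rewrite row0; apply: Ainj; rewrite -row_mul mulmx_ker row0.
Qed.

Lemma unitmx_mul_ctr p q (G : 'M[C]_(p, q)) : row_free G -> G *m ctr G \in unitmx.
Proof.
move=> Gfree; apply: unitmx_row_inj => u uGG0; apply/eqP.
rewrite -(mulmx_free_eq0 _ Gfree) -dotmx_eq0 dotmx_mulmxl -mulmxA uGG0.
by rewrite dotmx0r.
Qed.

Lemma ctr_invmx_hermitian p (A : 'M[C]_p) : ctr A = A -> ctr (invmx A) = invmx A.
Proof. by rewrite ctr_inv => ->. Qed.

Lemma is_MP_pinv_factor p r (F : 'M[C]_(p, r)) (G : 'M[C]_(r, p)) :
  row_full F -> row_free G ->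
  is_MP_pinv (F *m G) (ctr G *m invmx (G *m ctr G) *m invmx (ctr F *m F) *m ctr F).
Proof.
move=> Ffull Gfree; rewrite -row_free_ctr in Ffull.
have uGG := unitmx_mul_ctr Gfree; have uFF := unitmx_mul_ctr Ffull; rewrite ctrK in uFF.
set P := invmx (G *m ctr G); set Q := invmx (ctr F *m F).
have GP : G *m ctr G *m P = 1%:M by rewrite mulmxV.
have QF : Q *m ctr F *m F = 1%:M by rewrite -mulmxA mulVmx.
have P_herm : ctr P = P by apply: ctr_invmx_hermitian; rewrite ctrM ctrK.
have Q_herm : ctr Q = Q by apply: ctr_invmx_hermitian; rewrite ctrM ctrK.
have AX : F *m G *m (ctr G *m P *m Q *m ctr F) = F *m Q *m ctr F.
  by rewrite -[X in _ = X *m Q *m _](mulmx1 F) -GP !mulmxA.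
have XA : ctr G *m P *m Q *m ctr F *m (F *m G) = ctr G *m P *m G.
  by rewrite -[X in _ = _ *m X](mul1mx G) -QF !mulmxA.
split.
- by rewrite AX -[X in _ = X *m _](mulmx1 F) -QF !mulmxA.
- by rewrite XA -[X in _ = X *m Q *m _](mulmx1 (ctr G *m P)) -GP !mulmxA.
- by rewrite AX !ctrM ctrK Q_herm mulmxA.
- by rewrite XA !ctrM ctrK P_herm mulmxA.
Qed.

Lemma pinv_mulmx_range p (A X : 'M[C]_p) (e : 'rV[C]_p) :
  ctr A = A -> is_MP_pinv A X -> (forall u, u *m A = 0 -> dotmx u e = 0) ->
  e *m X *m A = e.
Proof.
move=> A_herm [AXA XAX _ XA_herm] e_perp; set P := X *m A.
have PA : P *m A = A by rewrite /P -XA_herm -{2}A_herm -ctrM mulmxA AXA.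
have PP : P *m P = P by rewrite /P mulmxA XAX.
set v := e - e *m P.
have vA : v *m A = 0 by rewrite mulmxBl -mulmxA PA subrr.
have vP : v *m P = 0 by rewrite mulmxBl -mulmxA PP subrr.
suff /eqP : v = 0 by rewrite subr_eq0 mulmxA => /eqP.
apply/eqP; rewrite -dotmx_eq0 {2}/v dotmxBr e_perp // /P -XA_herm -dotmx_mulmxl vP.
by rewrite dotmx0l subrr.
Qed.

Lemma pinvP p (A : 'M[C]_p) : is_MP_pinv A (pinv A).
Proof.
apply: epsilon_spec; rewrite -{1}(mulmx_base A).
by eexists; apply: is_MP_pinv_factor; [exact: col_base_full | exact: row_base_free].
Qed.

(* Lagrange's identity: twice the defect is the sum of w k w l |p k q l - p l q k|^2. *)
Lemma cauchy_schwarz_wsum m (w p q : 'I_m -> C) : (forall k, 0 <= w k) ->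
  `|\sum_k w k * (p k * (q k)^*)| ^+ 2
  <= (\sum_k w k * (p k * (p k)^*)) * (\sum_k w k * (q k * (q k)^*)).
Proof.
move=> w_ge0; have w_real k : (w k)^* = w k by apply/conj_Creal/ger0_real.
pose A k l := w k * (p k * (p k)^*) * (w l * (q l * (q l)^*)).
pose B k l := w k * (p k * (q k)^*) * (w l * (p l)^* * q l).
have -> : `|\sum_k w k * (p k * (q k)^*)| ^+ 2 = \sum_k \sum_l B k l.
  rewrite normCK rmorph_sum mulr_suml; apply: eq_bigr => k _.
  rewrite mulr_sumr; apply: eq_bigr => l _.
  by rewrite /B !rmorphM /= w_real conjCK; ring.
have -> : (\sum_k w k * (p k * (p k)^*)) * (\sum_k w k * (q k * (q k)^*))
          = \sum_k \sum_l A k l.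
  by rewrite mulr_suml; apply: eq_bigr => k _; rewrite mulr_sumr.
have defect : \sum_k \sum_l A k l - \sum_k \sum_l B k l = \sum_k \sum_l (A k l - B k l).
  by rewrite -sumrB; apply: eq_bigr => k _; rewrite sumrB.
have defect_sym : \sum_k \sum_l (A l k - B l k) = \sum_k \sum_l (A k l - B k l).
  by rewrite exchange_big.
rewrite -subr_ge0 -(ler_pMn2r (n := 2)) // mul0rn mulr2n {1}defect defect -{2}defect_sym.
rewrite -big_split /=; apply: sumr_ge0 => k _; rewrite -big_split /=; apply: sumr_ge0 => l _.
have -> : A k l - B k l + (A l k - B l k) =
          w k * w l * ((p k * q l - p l * q k) * (p k * q l - p l * q k)^*).
  by rewrite /A /B rmorphB !rmorphM /=; ring.
by rewrite mulr_ge0 ?mul_conjC_ge0 ?mulr_ge0.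
Qed.

Lemma dotmx_cauchy_schwarz p (u v : 'rV[C]_p) :
  `|dotmx u v| ^+ 2 <= dotmx u u * dotmx v v.
Proof.
have := cauchy_schwarz_wsum (u 0) (v 0) (w := fun=> 1) (fun=> ler01).
by rewrite !dotmxE !(eq_bigr _ (fun k _ => mul1r _)).
Qed.

Definition weighted_gram p m (F : 'M[C]_(p, m)) (w : 'I_m -> C) : 'M[C]_p :=
  F *m diag_mx (\row_k w k) *m ctr F.

Lemma dotmx_weighted_gramE p m (F : 'M[C]_(p, m)) (w : 'I_m -> C) (u v : 'rV[C]_p) :
  dotmx (u *m weighted_gram F w) v = \sum_k w k * ((u *m F) 0 k * ((v *m F) 0 k)^*).
Proof.
rewrite /weighted_gram !mulmxA dotmx_mulmxl ctrK dotmxE.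
by apply: eq_bigr => k _; rewrite mul_mx_diag !mxE mulrCA mulrA.
Qed.

Section PositiveSemidefinite.
Variables (p m : nat) (F : 'M[C]_(p, m)) (w : 'I_m -> C).
Hypothesis w_ge0 : forall k, 0 <= w k.
Local Notation L := (weighted_gram F w).

Lemma ctr_weighted_gram : ctr L = L.
Proof.
rewrite /weighted_gram !ctrM ctrK mulmxA; congr (_ *m _ *m _).
apply/matrixP => x y; rewrite ctrE !mxE eq_sym.
by case: eqP => [->|]; rewrite ?mulr1n ?mulr0n ?rmorph0 ?conj_Creal ?ger0_real.
Qed.

Lemma dotmx_weighted_gramC (u v : 'rV[C]_p) : dotmx u (v *m L) = dotmx (u *m L) v.
Proof. by rewrite dotmx_mulmxl ctr_weighted_gram. Qed.

Lemma weighted_gram_form_ge0 (u : 'rV[C]_p) : 0 <= dotmx (u *m L) u.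
Proof.
by rewrite dotmx_weighted_gramE sumr_ge0 // => k _; rewrite mulr_ge0 ?mul_conjC_ge0.
Qed.

Lemma weighted_gram_cauchy_schwarz (u v : 'rV[C]_p) :
  `|dotmx (u *m L) v| ^+ 2 <= dotmx (u *m L) u * dotmx (v *m L) v.
Proof. by rewrite !dotmx_weighted_gramE; apply: cauchy_schwarz_wsum. Qed.

(* If [u (s + L) = 0] then [s <u, u> + <u L, u>] vanishes together with its
   conjugate [- s <u, u> + <u L, u>]. *)
Lemma unitmx_imag_shift om : om \is Num.real -> om != 0 -> ('i * om)%:M + L \in unitmx.
Proof.
move=> om_real om_neq0; apply: unitmx_row_inj => u uM0; apply/eqP.
set s := 'i * om; set a := dotmx (u *m L) u; set b := dotmx u u.
have s_conj : s^* = - s by rewrite rmorphM /= conjCi conj_Creal // mulNr.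
have form0 : s * b + a = 0.
  have := congr1 (fun v => dotmx v u) uM0.
  by rewrite /= mulmxDr mul_mx_scalar dotmxDl dotmxZl dotmx0l.
have form0_conj : - s * b + a = 0.
  have := congr1 Num.conj form0.
  by rewrite rmorphD rmorphM /= s_conj !conj_Creal ?rmorph0 ?ger0_real ?dotmx_ge0
    ?weighted_gram_form_ge0.
have : s * b *+ 2 = (s * b + a) - (- s * b + a) by ring.
rewrite form0 form0_conj subrr.
rewrite -dotmx_eq0 -/b => /eqP; rewrite mulrn_eq0 /= mulf_eq0 => /orP[|//].
by rewrite mulf_eq0 (negbTE (neq0Ci C)) (negbTE om_neq0).
Qed.

End PositiveSemidefinite.

End HermitianForms.

Lemma is_lub_of_defect (C : numClosedFieldType) (g : C -> C) (R K : C) :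
  0 <= R -> 0 <= K ->
  (forall om, om \is Num.real -> om != 0 -> g om <= R) ->
  (forall om, om \is Num.real -> om != 0 -> (R - g om) ^+ 2 <= `|om| * K) ->
  is_lub (fun x => exists om, [/\ om \is Num.real, om != 0 & x = g om]) R.
Proof.
move=> R_ge0 K_ge0 g_le defect; split=> [_ [om [om_real om_neq0 ->]]|b b_ub].
  exact: g_le.
have g1_le_b : g 1 <= b by apply: b_ub; exists 1; rewrite real1 oner_neq0.
have b_real : b \is Num.real.
  by rewrite -(ler_real g1_le_b) (ler_real (g_le 1 (real1 _) (oner_neq0 _))) ger0_real.
rewrite (real_leNgt (ger0_real R_ge0) b_real); apply/negP => b_lt_R.
set d := R - b; have d_gt0 : 0 < d by rewrite subr_gt0.
(* A frequency this small forces g om within d of R, but g om <= b = R - d. *)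
set om := d ^+ 2 / (K + 1).
have K1_gt0 : 0 < K + 1 by rewrite ltr_wpDl.
have om_gt0 : 0 < om by rewrite divr_gt0 ?exprn_gt0.
have om_real := gtr0_real om_gt0; have om_neq0 := lt0r_neq0 om_gt0.
have g_le_b : g om <= b by apply: b_ub; exists om.
have d_le : d <= R - g om by rewrite lerD2l lerN2.
have d_sqr_le : d ^+ 2 <= (R - g om) ^+ 2.
  by rewrite ler_pXn2r ?nnegrE ?(ltW d_gt0) ?(le_trans (ltW d_gt0) d_le).
have := le_trans d_sqr_le (defect om om_real om_neq0).
rewrite gtr0_norm // /om mulrAC ler_pdivlMr // ler_pM2l ?exprn_gt0 //.
by rewrite gerDl ler10.
Qed.

Section FrequencyResponse.
Variables (C : numClosedFieldType) (n m : nat) (F : 'M[C]_(n, m)) (w : 'I_m -> C).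
Variable E : 'cV[C]_n.
Hypotheses (w_ge0 : forall k, 0 <= w k) (E_real : ctr E^T = E).
Hypothesis E_perp_ker : forall u : 'rV_n, u *m weighted_gram F w = 0 -> u *m E = 0.

Local Notation L := (weighted_gram F w).
Local Notation e := E^T.
Local Notation y := (E^T *m pinv L).
Local Notation R := (dotmx (y *m L) y).

Let gramC := dotmx_weighted_gramC F w_ge0.

Lemma row_pinv_weighted_gram : y *m L = e.
Proof.
apply: pinv_mulmx_range (ctr_weighted_gram F w_ge0) (pinvP _) _ => u /E_perp_ker uE0.
by rewrite /dotmx E_real uE0 mxE.
Qed.

Lemma resistance_formE : (e *m pinv L *m E) 0 0 = R.
Proof.
by rewrite -{2}E_real -[LHS]/(dotmx y e) -{2}row_pinv_weighted_gram gramC.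
Qed.

Section AtFrequency.
Variable om : C.
Hypotheses (om_real : om \is Num.real) (om_neq0 : om != 0).

Local Notation s := ('i * om).
Local Notation z := (e *m invmx (s%:M + L)).
Local Notation a := (dotmx (z *m L) z).
Local Notation b := (dotmx z z).

Let s_conj : s^* = - s.
Proof. by rewrite rmorphM /= conjCi conj_Creal // mulNr. Qed.

Let z_shift : z *m (s%:M + L) = e.
Proof. by rewrite mulmxKV // (unitmx_imag_shift F w_ge0). Qed.

Lemma transferE : transfer L E s = a - 'i * (om * b).
Proof.
rewrite /transfer -{2}E_real -[LHS]/(dotmx z e) -{2}z_shift mulmxDr mul_mx_scalar.
by rewrite dotmxDr dotmxZr gramC s_conj addrC mulNr mulrA.
Qed.

Let transfer_dotmx : transfer L E s = dotmx (z *m L) y.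
Proof.
rewrite /transfer -{2}E_real -[LHS]/(dotmx z e) -{2}row_pinv_weighted_gram.
exact: gramC.
Qed.
Let a_ge0 : 0 <= a. Proof. exact: weighted_gram_form_ge0. Qed.
Let b_ge0 : 0 <= b. Proof. exact: dotmx_ge0. Qed.
Let R_ge0 : 0 <= R. Proof. exact: weighted_gram_form_ge0. Qed.
Let a_real := ger0_real a_ge0.
Let b_real := ger0_real b_ge0.
Let R_real := ger0_real R_ge0.

Lemma norm_transfer_sqr : `|transfer L E s| ^+ 2 = a ^+ 2 + (om * b) ^+ 2.
Proof.
by rewrite transferE -mulrN normC2_rect ?sqrrN // rpredN realM.
Qed.

Lemma norm_transfer_sqr_le : `|transfer L E s| ^+ 2 <= a * R.
Proof. by rewrite transfer_dotmx (weighted_gram_cauchy_schwarz F w_ge0). Qed.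

(* [y L = e = z (s + L)] gives [(y - z) L = s z], whence [R - a + i om b = s <z, y>]. *)
Lemma resistance_defect :
  (R - a) ^+ 2 + (om * b) ^+ 2 <= om ^+ 2 * (b * dotmx y y).
Proof.
have yz_gram : (y - z) *m L = s *: z.
  by rewrite mulmxBl row_pinv_weighted_gram -{1}z_shift mulmxDr mul_mx_scalar addrK.
have R_split : R = s * dotmx z y + dotmx (z *m L) y.
  by rewrite -{1}(subrK z y) mulmxDl dotmxDl yz_gram dotmxZl.
have defect : R - a + 'i * (om * b) = s * dotmx z y.
  by rewrite R_split -transfer_dotmx transferE; ring.
rewrite -normC2_rect ?realM ?rpredB // defect normrM exprMn normrM normCi mul1r.
rewrite real_normK // ler_wpM2l ?dotmx_cauchy_schwarz //.
by rewrite -realEsqr.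
Qed.

Let a_le_norm_transfer : a <= `|transfer L E s|.
Proof.
rewrite -(ler_pXn2r (n := 2)) ?nnegrE // norm_transfer_sqr lerDl -realEsqr.
exact: realM.
Qed.

Lemma norm_transfer_le_resistance : `|transfer L E s| <= R.
Proof.
have [->//|G_neq0] := eqVneq `|transfer L E s| 0.
have G_gt0 : 0 < `|transfer L E s| by rewrite lt_def G_neq0 normr_ge0.
rewrite -(ler_pM2l G_gt0) -expr2.
by apply: le_trans norm_transfer_sqr_le _; rewrite ler_wpM2r.
Qed.

Lemma resistance_sub_norm_transfer_sqr :
  (R - `|transfer L E s|) ^+ 2 <= `|om| * (dotmx y y * R).
Proof.
have G_le_R := norm_transfer_le_resistance.
have om_b_le : `|om| * b <= `|transfer L E s|.
  rewrite -(ler_pXn2r (n := 2)) ?nnegrE ?mulr_ge0 // norm_transfer_sqr exprMn.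
  by rewrite real_normK // -exprMn lerDr -realEsqr.
have : (R - `|transfer L E s|) ^+ 2 <= (R - a) ^+ 2.
  by rewrite ler_pXn2r ?nnegrE ?subr_ge0 ?lerD2l ?lerN2 // (le_trans a_le_norm_transfer).
move/le_trans; apply; apply: le_trans (le_trans _ resistance_defect) _.
  by rewrite lerDl -realEsqr realM.
have -> : om ^+ 2 * (b * dotmx y y) = `|om| * (dotmx y y * (`|om| * b)).
  by rewrite -real_normK //; ring.
by rewrite ler_wpM2l ?normr_ge0 // ler_wpM2l ?dotmx_ge0 // (le_trans om_b_le).
Qed.

End AtFrequency.

Lemma is_hinf_norm_weighted_gram : is_hinf_norm L E ((e *m pinv L *m E) 0 0).
Proof.
rewrite resistance_formE.
apply: (is_lub_of_defect (g := fun om => `|transfer L E ('i * om)|) (K := dotmx y y * R)).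
- exact: weighted_gram_form_ge0.
- by rewrite mulr_ge0 ?dotmx_ge0 ?weighted_gram_form_ge0.
- exact: norm_transfer_le_resistance.
- exact: resistance_sub_norm_transfer_sqr.
Qed.

End FrequencyResponse.

Section GraphLaplacian.
Variables (C : numClosedFieldType) (n m : nat) (src dst : 'I_m -> 'I_n).
Local Notation B := (incidence C src dst).

Lemma sum_mul_indicator_diff (f : 'I_n -> C) a b :
  \sum_x f x * ((x == a)%:R - (x == b)%:R) = f a - f b.
Proof.
have sum_ind c : \sum_x f x * (x == c)%:R = f c.
  by rewrite (bigD1 c) //= eqxx mulr1 big1 ?addr0 // => x /negbTE ->; rewrite mulr0.
by rewrite -(sum_ind a) -(sum_ind b) -sumrB; apply: eq_bigr => x _; rewrite mulrBr.
Qed.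

Lemma ctr_incidence : ctr B = B^T.
Proof. by apply/matrixP => x k; rewrite ctrE !mxE rmorphB /= !rmorph_nat. Qed.

Lemma laplacian_weighted_gram w : laplacian src dst w = weighted_gram B w.
Proof. by rewrite /weighted_gram ctr_incidence. Qed.

Lemma row_mul_incidence (u : 'rV[C]_n) k : (u *m B) 0 k = u 0 (src k) - u 0 (dst k).
Proof. by rewrite mxE -sum_mul_indicator_diff; apply: eq_bigr => x _; rewrite mxE. Qed.

Lemma laplacian_ker_const (w : 'I_m -> C) (u : 'rV[C]_n) :
  connected_graph src dst -> (forall k, 0 < w k) ->
  u *m laplacian src dst w = 0 -> forall x y, u 0 x = u 0 y.
Proof.
move=> conn w_gt0 uL0.
have form0 := congr1 (fun v => dotmx v u) uL0.
rewrite /= laplacian_weighted_gram dotmx_weighted_gramE dotmx0l in form0.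
have edge_const k : u 0 (src k) = u 0 (dst k).
  have term_ge0 l : 0 <= w l * ((u *m B) 0 l * ((u *m B) 0 l)^*).
    by rewrite mulr_ge0 ?mul_conjC_ge0 // ltW.
  have /(_ k isT)/eqP := psumr_eq0P (fun l _ => term_ge0 l) form0.
  by rewrite mulf_eq0 (gt_eqF (w_gt0 k)) mul_conjC_eq0 row_mul_incidence subr_eq0 => /eqP.
move=> x y; apply/eqP; rewrite eq_sym.
have closed_level : closed (adj src dst) [pred v | u 0 v == u 0 x].
  by move=> a b /existsP[k /orP[] /andP[/eqP <- /eqP <-]]; rewrite !inE edge_const.
rewrite -[_ == _]/(y \in [pred v | u 0 v == u 0 x]).
by rewrite -(closed_connect closed_level (conn x y)) inE.
Qed.

End GraphLaplacian.

Lemma ctr_port (C : numClosedFieldType) n (i j : 'I_n) : ctr (port C i j)^T = port C i j.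
Proof. by apply/matrixP => x k; rewrite ctrE !mxE rmorphB /= !rmorph_nat. Qed.

Lemma row_mul_port (C : numClosedFieldType) n (i j : 'I_n) (u : 'rV[C]_n) :
  (u *m port C i j) 0 0 = u 0 i - u 0 j.
Proof. by rewrite mxE -sum_mul_indicator_diff; apply: eq_bigr => x _; rewrite mxE. Qed.

Unset Implicit Arguments.

Theorem theorem3 (C : numClosedFieldType) (n m : nat)
  (src dst : 'I_m -> 'I_n) (w : 'I_m -> C) (i j : 'I_n) :
  simple_edges src dst ->
  connected_graph src dst ->
  (forall k, 0 < w k) ->
  i != j ->
  is_hinf_norm (laplacian src dst w) (port C i j)
    (eff_resistance (laplacian src dst w) i j).
Proof.
move=> _ conn w_gt0 _.
have w_ge0 k : 0 <= w k by apply: ltW.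
have port_perp_ker (u : 'rV_n) : u *m laplacian src dst w = 0 -> u *m port C i j = 0.
  move=> uL0; apply/matrixP => x y; rewrite !ord1 row_mul_port mxE.
  by rewrite (laplacian_ker_const conn w_gt0 uL0 i j) subrr.
rewrite /eff_resistance laplacian_weighted_gram in port_perp_ker *.
by apply: is_hinf_norm_weighted_gram => //; apply: ctr_port.
Qed.
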